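(* Let $G=(V,E)$ be a tree on $n$ vertices, $\alpha\in(0,1)$, $\bm q$ a probability distribution on $V$, and $v\in V$ with $d_v=|\Gamma(v)|$. Let $W=V\setminus(\Gamma(v)\cup\{v\})$, and define $F(\bm x,\bm y)$ for $\bm x\in\{0,1\}^{\Gamma(v)}\setminus\{\bm 0\}$, $\bm y\in\{0,1\}^{W}$ as below. Fix an ordering of $W$ in which $e_u$ is nonincreasing (ties broken arbitrarily) and for $0\le m\le |W|$ let $\hat{\bm y}^{m}\in\{0,1\}^W$ be the indicator vector of the first $m$ elements in this ordering. Then for every $l$ with $1\le l\le n-1$, $$\max\{F(\bm x,\bm y): \bm 1^T\bm x+\bm 1^T\bm y=l\}=\max\{F(\bm x,\hat{\bm y}^{l_2}): \bm 1^T\bm x=l_1,\ 1\le l_1\le d_v,\ 0\le l_2\le |W|,\ l_1+l_2=l\},$$ where both maxima are over the feasible $\bm x\neq\bm 0$ (and $\bm y$) satisfying the stated constraints.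
   Context: Potentials: $\phi_{uv}$ is the probability that an $\alpha$-random walk on the tree (at each step, with probability $\alpha$ it jumps, otherwise moves to a uniformly random neighbour) started at $u$ visits $v$ before its first jump; $\phi_{vv}=1$ and $\phi_{uv}=\frac{1-\alpha}{|\Gamma(u)|}\sum_{w\in\Gamma(u)}\phi_{wv}$ for $u\ne v$, with $\Gamma(u)$ the neighbour set. Root the tree at $v$; for $i\in\Gamma(v)$ let $N_i$ be the vertex set of the subtree rooted at $i$ (including $i$); every $u\in W$ lies in $N_i\setminus\{i\}$ for exactly one $i\in\Gamma(v)$. Constants: $a_i=\alpha\sum_{u\in N_i}q_u\phi_{uv}$ and $c_i=(1-\alpha)\phi_{iv}$ for $i\in\Gamma(v)$; $e_u=(1-\alpha)\phi_{uv}$ for $u\in W$. The function (the PageRank of $v$ in the request-delete-model when $v$ keeps the edges to $\{i:x_i=1\}$ and adds outgoing arcs to $\{u:y_u=1\}$) is $$F(\bm x,\bm y)=(\bm 1^T\bm x+\bm 1^T\bm y)\,\frac{\sum_{i\in\Gamma(v)}a_ix_i}{\sum_{i\in\Gamma(v)}\Big((1-c_i)x_i+\sum_{u\in N_i\setminus\{i\}}(1-e_ux_i)\,y_u\Big)}.$$ *)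

From HB Require Import structures.
From mathcomp Require Import all_boot all_order all_algebra.
Set Implicit Arguments. Unset Strict Implicit. Unset Printing Implicit Defensive.
Import Order.TTheory GRing.Theory Num.Theory.
Local Open Scope ring_scope.

Definition nbhd (T : finType) (adj : rel T) (u : T) : {set T} := [set w | adj u w].

(* A tree: simple (symmetric, irreflexive), connected, with |E| = n - 1
   (ordered adjacent pairs count each edge twice). *)
Definition is_tree (T : finType) (adj : rel T) : Prop :=
  [/\ symmetric adj, irreflexive adj, (forall u w, connect adj u w) &
      #|[set p : T * T | adj p.1 p.2]| = (2 * (#|T| - 1))%N].

Definition Wset (T : finType) (adj : rel T) (v : T) : {set T} :=
  ~: (v |: nbhd adj v).

(* N_i: vertex set of the subtree rooted at i when the tree is rooted at v
   (vertices reachable from i without passing through v). *)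
Definition subtree (T : finType) (adj : rel T) (v i : T) : {set T} :=
  [set u | connect [rel a b | [&& adj a b, a != v & b != v]] i u].

Section F.
Variables (R : realFieldType) (T : finType) (adj : rel T) (alpha : R)
  (q : T -> R) (phi : T -> T -> R) (v : T).

Definition a_const (i : T) : R :=
  alpha * \sum_(u in subtree adj v i) q u * phi u v.
Definition c_const (i : T) : R := (1 - alpha) * phi i v.
Definition e_const (u : T) : R := (1 - alpha) * phi u v.

Definition b2R (b : bool) : R := (nat_of_bool b)%:R.

(* F(x, y); x is meant to be supported on Gamma(v), y on W. *)
Definition Fval (x y : T -> bool) : R :=
  ((#|[set u | x u]| + #|[set u | y u]|)%N)%:R *
  ((\sum_(i in nbhd adj v) a_const i * b2R (x i)) /
   (\sum_(i in nbhd adj v)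
      ((1 - c_const i) * b2R (x i) +
       \sum_(u in subtree adj v i :\ i) (1 - e_const u * b2R (x i)) * b2R (y u)))).
End F.

Definition yhat (T : eqType) (s : seq T) (m : nat) : T -> bool :=
  fun u => u \in take m s.

Definition is_max_of (X : Type) (R : realFieldType) (P : X -> Prop) (f : X -> R) (m : R) : Prop :=
  (exists z, P z /\ f z = m) /\ (forall z, P z -> f z <= m).

From HB Require Import structures.
From mathcomp Require Import all_boot all_order all_algebra.
From mathcomp Require Import lra zify.
Import Order.TTheory GRing.Theory Num.Theory.
Set Implicit Arguments. Unset Strict Implicit. Unset Printing Implicit Defensive.
Local Open Scope ring_scope.

(* Encode x and y by the sets X of kept neighbours of v and Y of new targets
   in W.  Every u in W lies below exactly one neighbour [branch u] of v, so
     F(X, Y) = (|X| + |Y|) * N(X) / D(X, Y),   N(X) = sum_{i in X} a_i,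
     D(X, Y) = sum_{i in X} (1 - c_i) + sum_{u in Y} (1 - e_u [branch u in X]).
   Since phi(., v) is an averaged, damped harmonic function, it lies in [0, 1]
   and decreases down every branch, so e_u <= c_(branch u).
   Exchange argument: if Y is not the prefix of length |Y| of the ordering s,
   take w in Y outside it and u in the prefix outside Y (so e_w <= e_u); either
   swap w for u in Y (when branch u is in X) or trade w for branch u in X.
   Neither move decreases F or changes |X| + |Y|, and they terminate at a
   prefix.  Hence every feasible (X, Y) is dominated by a feasible (X', prefix),
   and the maximum of the finite prefix problem is the maximum of both problems. *)

(* A connected symmetric relation has at least 2(|T| - 1) ordered adjacent
   pairs: each non-root vertex contributes the two pairs with its BFS parent. *)
Section SpanningPairs.
Variables (T : finType) (e : rel T) (r : T).
Hypothesis e_sym : symmetric e.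
Hypothesis e_conn : forall u, connect e r u.

Definition ball (n : nat) : {set T} :=
  iter n (fun S => S :|: [set y | [exists x in S, e x y]]) [set r].

Lemma ball_path p x m : path e x p -> x \in ball m -> last x p \in ball (m + size p).
Proof.
elim: p x m => [|y p IH] x m /=; first by rewrite addn0.
move=> /andP[exy pp] xm; rewrite -addSnnS; apply: IH => //.
rewrite /= in_setU; apply/orP; right; rewrite in_set.
by apply/existsP; exists x; rewrite xm exy.
Qed.

Lemma in_some_ball u : exists n, u \in ball n.
Proof.
have /connectP[p pp ->] := e_conn u.
by exists (0 + size p)%N; apply: ball_path; rewrite //= set11.
Qed.

Definition depth (u : T) : nat := ex_minn (in_some_ball u).

Lemma depth_ball u : u \in ball (depth u).
Proof. by rewrite /depth; case: ex_minnP. Qed.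

Lemma depth_min u n : u \in ball n -> (depth u <= n)%N.
Proof. by rewrite /depth; case: ex_minnP => m _ m_min /m_min. Qed.

Lemma parent_exists u : u != r -> exists x, e x u && (depth x < depth u)%N.
Proof.
move=> ur; have := depth_ball u; case du: (depth u) => [|k].
  by rewrite /= in_set1 (negbTE ur).
rewrite /= in_setU => /orP[uk|]; first by have := depth_min uk; rewrite du ltnn.
rewrite in_set => /existsP[x /andP[xk exu]].
by exists x; rewrite exu ltnS depth_min.
Qed.

(* A neighbour of u closer to r (r itself for u = r). *)
Definition parent (u : T) : T := odflt r [pick x | e x u && (depth x < depth u)%N].

Lemma parentP u : u != r -> e (parent u) u && (depth (parent u) < depth u)%N.
Proof.
move=> ur; rewrite /parent; case: pickP => [x -> //|none].
by have [x] := parent_exists ur; rewrite none.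
Qed.

Lemma connected_pairs_lb : (2 * (#|T| - 1) <= #|[set p : T * T | e p.1 p.2]|)%N.
Proof.
set A := [set~ r].
set S1 := [set (u, parent u) | u in A].
set S2 := [set (parent u, u) | u in A].
have c1 : #|S1| = #|A| by apply: card_imset => a b [].
have c2 : #|S2| = #|A| by apply: card_imset => a b [].
have disj : [disjoint S1 & S2].
  rewrite disjoint_subset; apply/subsetP => p /imsetP[u uA ->]; rewrite inE.
  apply/negP => /imsetP[w wA [e1 e2]].
  move: uA wA; rewrite !in_setC1 => /parentP/andP[_ h1] /parentP/andP[_ h2].
  rewrite -e1 in h2; rewrite e2 in h1.
  by have := ltn_trans h1 h2; rewrite ltnn.
have sub : S1 :|: S2 \subset [set p : T * T | e p.1 p.2].
  apply/subsetP => p; rewrite in_setU => /orP[] /imsetP[u + ->];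
  by rewrite in_setC1 => /parentP/andP[h _]; rewrite in_set //= e_sym.
have /eqP cardU := (leq_card_setU S1 S2).2; rewrite disj in cardU.
have := subset_leq_card sub; rewrite cardU c1 c2 cardsC1.
by rewrite mul2n -addnn subn1.
Qed.

End SpanningPairs.

Definition avoid (T : finType) (adj : rel T) (v : T) : rel T :=
  [rel a b | [&& adj a b, a != v & b != v]].

Lemma in_subtree (T : finType) (adj : rel T) (v i u : T) :
  (u \in subtree adj v i) = connect (avoid adj v) i u.
Proof. by rewrite inE. Qed.

Section Branches.
Variables (T : finType) (adj : rel T) (v : T).
Hypothesis tree : is_tree adj.

Let adj_sym : symmetric adj. Proof. by case: tree. Qed.
Let adj_irr : irreflexive adj. Proof. by case: tree. Qed.

Local Notation av := (avoid adj v).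

Lemma avoid_sym : symmetric av.
Proof.
move=> a b; rewrite /avoid /= adj_sym.
by case: (adj b a); case: (a != v); case: (b != v).
Qed.

(* Two distinct neighbours of v joined avoiding v would close a cycle: the
   graph without the edge {v, j} would stay connected with too few edges. *)
Lemma neighbours_disconnected i j : adj v i -> adj v j -> connect av i j -> i = j.
Proof.
move=> vi vj cij; apply/eqP/negPn/negP => ij.
have vi' : v != i by apply: contraTneq vi => <-; rewrite adj_irr.
have vj' : v != j by apply: contraTneq vj => <-; rewrite adj_irr.
pose e' := [rel a b | adj a b && ~~ ((a == v) && (b == j)) && ~~ ((a == j) && (b == v))].
have e'_sym : symmetric e'.
  move=> a b /=; rewrite [adj b a]adj_sym.
  by case: (adj a b); case: (a == v); case: (a == j); case: (b == v); case: (b == j).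
have cij' : connect e' i j.
  apply: connect_sub cij => a b /and3P[ab av bv]; apply: connect1.
  by rewrite /= ab (negbTE av) (negbTE bv) !andbF.
have adj_sub : subrel adj (connect e').
  move=> a b ab.
  have [/andP[/eqP-> /eqP->]|E1] := boolP ((a == v) && (b == j)).
    apply: connect_trans cij'; apply: connect1.
    by rewrite /= vi eqxx (negbTE ij) (eq_sym i v) (negbTE vi') ?andbF.
  have [/andP[/eqP-> /eqP->]|E2] := boolP ((a == j) && (b == v)).
    rewrite (sym_connect_sym e'_sym); apply: connect_trans cij'; apply: connect1.
    by rewrite /= vi eqxx (negbTE ij) (eq_sym i v) (negbTE vi') ?andbF.
  by apply: connect1; rewrite /= ab E1 E2.
have e'_conn u : connect e' v u.
  by case: tree => _ _ conn _; exact: (connect_sub adj_sub (conn v u)).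
have := connected_pairs_lb e'_sym e'_conn.
have -> : [set p : T * T | e' p.1 p.2] =
          [set p : T * T | adj p.1 p.2] :\ (v, j) :\ (j, v).
  apply/setP => [[a b]]; rewrite !inE /= !xpair_eqE.
  by case: (adj a b); case: (a == v); case: (a == j); case: (b == v); case: (b == j).
set E := [set p : T * T | adj p.1 p.2].
have := cardsD1 (v, j) E; have := cardsD1 (j, v) (E :\ (v, j)).
rewrite !inE /= xpair_eqE (eq_sym j v) (negbTE vj') adj_sym vj /=.
case: tree => _ _ _ <- -> ->; lia.
Qed.

Lemma v_notin_subtree i : adj v i -> ~~ connect av i v.
Proof.
move=> vi; apply/negP => /connectP[p pp vl].
have : all (fun b => b != v) p.
  by elim: p i pp {vi vl} => [|y p IH] x //= /andP[/and3P[_ _ ->] /IH].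
move/allP; have := mem_last i p; rewrite -vl inE => /orP[/eqP E|vp /(_ v vp)].
  by rewrite -E adj_irr in vi.
by rewrite eqxx.
Qed.

(* Following a path from u to v up to its first visit of v. *)
Lemma in_some_subtree u : u != v -> exists2 i, adj v i & connect av i u.
Proof.
move=> uv; case: tree => _ _ conn _; have /connectP[p pp vl] := conn u v.
have vp : v \in u :: p by rewrite vl mem_last.
elim: p u uv pp vp {vl} => [|z p IH] u uv /=; first by rewrite inE eq_sym (negbTE uv).
move=> /andP[uz pp]; rewrite inE eq_sym (negbTE uv) /=.
have [zv _|zv vp] := eqVneq z v.
  by exists u; [rewrite adj_sym -zv | exact: connect0].
have [i vi ciz] := IH z zv pp vp; exists i => //.
by apply: connect_trans ciz (connect1 _); rewrite /avoid /= adj_sym uz zv uv.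
Qed.

Lemma subtree_in_W i u : adj v i -> connect av i u -> u != i -> u \in Wset adj v.
Proof.
move=> vi ciu ui; rewrite !inE negb_or; apply/andP; split.
  by apply: contraTneq ciu => ->; apply: v_notin_subtree.
apply: contra ui => vu; apply/eqP/(neighbours_disconnected vu vi).
by rewrite (sym_connect_sym avoid_sym).
Qed.

(* The neighbour of v whose subtree contains u (v itself if there is none). *)
Definition branch (u : T) : T :=
  odflt v [pick i | adj v i && connect av i u && (u != i)].

Lemma branchP u : u \in Wset adj v ->
  [/\ adj v (branch u), connect av (branch u) u & u != branch u].
Proof.
move=> uW; rewrite /branch; case: pickP => [i /andP[/andP[]] //|none].
have uv : u != v by move: uW; rewrite !inE negb_or => /andP[].
have [i vi ciu] := in_some_subtree uv.
have ui : u != i by apply: contraTneq uW => ->; rewrite !inE vi orbT.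
by have := none i; rewrite vi ciu ui.
Qed.

Lemma branch_unique i u : adj v i -> connect av i u -> u != i -> i = branch u.
Proof.
move=> vi ciu ui; have [vb cbu _] := branchP (subtree_in_W vi ciu ui).
apply: neighbours_disconnected vi vb _.
by apply: connect_trans ciu _; rewrite (sym_connect_sym avoid_sym).
Qed.

Lemma neighbour_exists : (1 < #|T|)%N -> exists i, adj v i.
Proof.
move=> /card_gt1P[a [b [_ _ ab]]].
have [u uv] : exists u, u != v.
  by have [av'|] := eqVneq a v; [exists b; rewrite -av' eq_sym | exists a].
by have [i vi _] := in_some_subtree uv; exists i.
Qed.

End Branches.

(* Maximum principle for the potentials phi(., v): off v, phi(u, v) is
   (1 - alpha) times the average of phi over the neighbours of u. *)
Section Potential.
Variables (R : realFieldType) (T : finType) (adj : rel T) (alpha : R)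
  (phi : T -> T -> R) (v : T).
Hypothesis tree : is_tree adj.
Hypothesis alpha_gt0 : 0 < alpha.
Hypothesis alpha_lt1 : alpha < 1.
Hypothesis phi_vv : phi v v = 1.
Hypothesis phi_rec : forall u, u != v ->
  phi u v = (1 - alpha) / (#|nbhd adj u|%:R) * \sum_(z in nbhd adj u) phi z v.

Lemma phi_ub u M : u != v -> (forall z, z \in nbhd adj u -> phi z v <= M) ->
  0 <= M -> phi u v <= (1 - alpha) * M.
Proof.
move=> uv le_M M_ge0; rewrite phi_rec //.
have damp_ge0 : 0 <= 1 - alpha by rewrite subr_ge0 ltW.
have [->|deg_gt0] := posnP #|nbhd adj u|.
  by rewrite invr0 mulr0 mul0r mulr_ge0.
have sum_le : \sum_(z in nbhd adj u) phi z v <= #|nbhd adj u|%:R * M.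
  by rewrite mulr_natl -sumr_const; apply: ler_sum.
apply: le_trans (ler_wpM2l _ sum_le) _; first exact: divr_ge0.
by rewrite -mulrA [_^-1 * _]mulrA mulVf ?mul1r // pnatr_eq0 -lt0n.
Qed.

Lemma phi_lb u m : u != v -> (forall z, z \in nbhd adj u -> m <= phi z v) ->
  m <= 0 -> (1 - alpha) * m <= phi u v.
Proof.
move=> uv ge_m m_le0; rewrite phi_rec //.
have damp_ge0 : 0 <= 1 - alpha by rewrite subr_ge0 ltW.
have [->|deg_gt0] := posnP #|nbhd adj u|.
  by rewrite invr0 mulr0 mul0r mulr_ge0_le0.
have sum_ge : #|nbhd adj u|%:R * m <= \sum_(z in nbhd adj u) phi z v.
  by rewrite mulr_natl -sumr_const; apply: ler_sum.
apply: le_trans _ (ler_wpM2l _ sum_ge); last exact: divr_ge0.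
by rewrite -mulrA [_^-1 * _]mulrA mulVf ?mul1r // pnatr_eq0 -lt0n.
Qed.

(* At a minimiser u0 != v the value would be < 0 and yet >= (1-alpha) times it. *)
Lemma phi_ge0 u : 0 <= phi u v.
Proof.
have [u0 _ u0_min] := arg_minP (fun w => phi w v) (isT : xpredT v).
apply: le_trans (u0_min u isT); rewrite leNgt; apply/negP => neg.
have u0v : u0 != v by apply: contraTneq neg => ->; rewrite phi_vv ltr10.
have := phi_lb u0v (fun z _ => u0_min z isT) (ltW neg).
have := alpha_gt0; nra.
Qed.

Lemma phi_le1 u : phi u v <= 1.
Proof.
have [u0 _ u0_max] := arg_maxP (fun w => phi w v) (isT : xpredT v).
apply: le_trans (u0_max u isT) _; rewrite leNgt; apply/negP => big.
have u0v : u0 != v by apply: contraTneq big => ->; rewrite phi_vv ltxx.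
have := phi_ub u0v (fun z _ => u0_max z isT) (le_trans ler01 (ltW big)).
have := alpha_gt0; nra.
Qed.

(* phi(., v) decreases down a branch: the maximum over the subtree of a
   neighbour i of v is attained at i, since every other vertex of the subtree
   has all its neighbours inside the subtree. *)
Lemma phi_subtree_le i u : adj v i -> connect (avoid adj v) i u -> phi u v <= phi i v.
Proof.
move=> vi ciu.
have [u0 ci0 u0_max] := arg_maxP (fun w => phi w v) (connect0 (avoid adj v) i).
apply: le_trans (u0_max u ciu) _; rewrite leNgt; apply/negP => big.
have u0i : u0 != i by apply: contraTneq big => ->; rewrite ltxx.
have u0v : u0 != v by apply: contraTneq ci0 => ->; apply: v_notin_subtree.
have u0W := subtree_in_W tree vi ci0 u0i.
have nbr_le z : z \in nbhd adj u0 -> phi z v <= phi u0 v.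
  rewrite inE => u0z; apply: u0_max; apply: connect_trans ci0 (connect1 _).
  rewrite /avoid /= u0z u0v /=; apply: contraTneq u0W => zv.
  by case: tree => adj_sym _ _ _; rewrite !inE -zv adj_sym u0z orbT.
have := phi_ub u0v nbr_le (phi_ge0 u0); have := phi_ge0 i.
have := alpha_gt0; have := alpha_lt1; nra.
Qed.

End Potential.

Lemma b2RE (R : realFieldType) b : b2R R b = if b then 1 else 0.
Proof. by case: b. Qed.

Lemma b2R_ge0 (R : realFieldType) b : 0 <= b2R R b. Proof. by case: b. Qed.
Lemma b2R_le1 (R : realFieldType) b : b2R R b <= 1. Proof. by case: b. Qed.

Lemma sum_indicator (R : realFieldType) (T : finType) (A X : {set T}) (f : T -> R) :
  X \subset A -> \sum_(i in A) f i * b2R R (i \in X) = \sum_(i in X) f i.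
Proof.
move=> XA; rewrite [RHS]big_mkcond [LHS]big_mkcond; apply: eq_bigr => i _.
have [iX|iX] := boolP (i \in X); last by case: (i \in A); rewrite ?mulr0.
by rewrite (subsetP XA) // mulr1.
Qed.

Lemma Fval_ext (R : realFieldType) (T : finType) (adj : rel T) (alpha : R) q phi v
    (x x' y y' : T -> bool) : x =1 x' -> y =1 y' ->
  Fval adj alpha q phi v x y = Fval adj alpha q phi v x' y'.
Proof.
move=> xx' yy'; rewrite /Fval.
have -> : [set u | x u] = [set u | x' u] by apply/setP => u; rewrite !inE xx'.
have -> : [set u | y u] = [set u | y' u] by apply/setP => u; rewrite !inE yy'.
congr (_ * (_ / _)); first by apply: eq_bigr => i _; rewrite xx'.
apply: eq_bigr => i _; rewrite xx'; congr (_ + _).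
by apply: eq_bigr => u _; rewrite yy'.
Qed.

Lemma sorted_take_drop (X : eqType) (r : rel X) (s : seq X) k a b :
  transitive r -> sorted r s -> a \in take k s -> b \in drop k s -> r a b.
Proof.
move=> r_tr; elim: s k => [|x s IH] [|k] //=.
rewrite inE => xs /orP[/eqP ->|ak] bd.
  by have /allP := order_path_min r_tr xs; apply; apply: mem_drop bd.
by apply: IH ak bd; apply: path_sorted xs.
Qed.

Section Objective.
Variables (R : realFieldType) (T : finType) (adj : rel T) (alpha : R)
  (q : T -> R) (phi : T -> T -> R) (v : T).
Hypothesis tree : is_tree adj.
Hypothesis alpha_gt0 : 0 < alpha.
Hypothesis alpha_lt1 : alpha < 1.
Hypothesis q_ge0 : forall u, 0 <= q u.
Hypothesis phi_vv : phi v v = 1.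
Hypothesis phi_rec : forall u, u != v ->
  phi u v = (1 - alpha) / (#|nbhd adj u|%:R) * \sum_(z in nbhd adj u) phi z v.

Local Notation G := (nbhd adj v).
Local Notation W := (Wset adj v).
Local Notation a := (a_const adj alpha q phi v).
Local Notation c := (c_const alpha phi v).
Local Notation e := (e_const alpha phi v).
Local Notation br := (branch adj v).

Let phi_nonneg u : 0 <= phi u v := phi_ge0 alpha_gt0 alpha_lt1 phi_vv phi_rec u.
Let phi_atmost1 u : phi u v <= 1 := phi_le1 alpha_gt0 alpha_lt1 phi_vv phi_rec u.

Definition FF (X Y : {set T}) : R :=
  Fval adj alpha q phi v (fun u => u \in X) (fun u => u \in Y).

Definition Nf (X : {set T}) : R := \sum_(i in X) a i.
Definition Df (X Y : {set T}) : R :=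
  \sum_(i in X) (1 - c i) + \sum_(u in Y) (1 - e u * b2R R (br u \in X)).

Lemma card_setE (X : {set T}) : #|[set u | u \in X]| = #|X|.
Proof. by apply: eq_card => u; rewrite inE. Qed.

(* Grouping the y-sum of F by branches. *)
Lemma FF_sets (X Y : {set T}) : X \subset G -> Y \subset W ->
  FF X Y = (#|X| + #|Y|)%:R * (Nf X / Df X Y).
Proof.
move=> XG YW; rewrite /FF /Fval !card_setE sum_indicator //; congr (_ * (_ / _)).
rewrite big_split /= sum_indicator //; congr (_ + _).
under eq_bigr => i _ do rewrite big_mkcond /=.
rewrite exchange_big /= [RHS]big_mkcond; apply: eq_bigr => u _.
have [uY|uY] := boolP (u \in Y); last first.
  by apply: big1 => i _; case: ifP; rewrite ?b2RE ?mulr0.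
have [vb cbu ub] := branchP tree (subsetP YW u uY).
rewrite (bigD1 (br u)) /=; last by rewrite inE.
rewrite in_setD1 in_subtree cbu ub b2RE mulr1 big1 ?addr0 // => i /andP[iG ib].
case: ifP => //; rewrite in_setD1 in_subtree => /andP[ui ciu].
by rewrite inE in iG; rewrite -(branch_unique tree iG ciu ui) eqxx in ib.
Qed.

Lemma e_ge0 u : 0 <= e u.
Proof. by apply: mulr_ge0; [rewrite subr_ge0 ltW | apply: phi_nonneg]. Qed.

Lemma e_le u : e u <= 1 - alpha.
Proof. by rewrite /e_const ler_piMr ?phi_atmost1 // subr_ge0 ltW. Qed.

(* c_i and e_i are the same quantity, named differently for neighbours of v. *)
Lemma c_le i : c i <= 1 - alpha. Proof. exact: e_le. Qed.

Lemma a_ge0 i : 0 <= a i.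
Proof.
apply: mulr_ge0; first exact: ltW.
by apply: sumr_ge0 => u _; rewrite mulr_ge0 ?phi_nonneg.
Qed.

Lemma Nf_ge0 (X : {set T}) : 0 <= Nf X.
Proof. by apply: sumr_ge0 => i _; apply: a_ge0. Qed.

(* Every kept neighbour contributes 1 - c_i >= alpha > 0 to D. *)
Lemma Df_gt0 (X Y : {set T}) : (0 < #|X|)%N -> 0 < Df X Y.
Proof.
move=> /card_gt0P[i iX]; rewrite /Df (bigD1 i) //=.
have rest_ge0 : 0 <= \sum_(j in X | j != i) (1 - c j).
  by apply: sumr_ge0 => j _; have := c_le j; have := alpha_gt0; lra.
have Y_ge0 : 0 <= \sum_(u in Y) (1 - e u * b2R R (br u \in X)).
  apply: sumr_ge0 => u _; have := e_le u; have := e_ge0 u.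
  have := b2R_ge0 R (br u \in X); have := b2R_le1 R (br u \in X).
  have := alpha_gt0; nra.
have := c_le i; have := alpha_gt0; lra.
Qed.

Lemma e_le_branch u : u \in W -> e u <= c (br u).
Proof.
move=> uW; have [vb cbu _] := branchP tree uW.
apply: ler_wpM2l; first by rewrite subr_ge0 ltW.
exact: (phi_subtree_le tree alpha_gt0 alpha_lt1 phi_vv phi_rec vb cbu).
Qed.

Lemma FF_le (X Y X' Y' : {set T}) :
  X \subset G -> X' \subset G -> Y \subset W -> Y' \subset W ->
  (0 < #|X|)%N -> (0 < #|X'|)%N -> (#|X| + #|Y| = #|X'| + #|Y'|)%N ->
  Nf X <= Nf X' -> Df X' Y' <= Df X Y -> FF X Y <= FF X' Y'.
Proof.
move=> XG X'G YW Y'W X0 X'0 card_eq leN leD.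
rewrite !FF_sets // card_eq ler_wpM2l // ler_pdivlMr ?Df_gt0 //.
rewrite mulrAC ler_pdivrMr ?Df_gt0 //.
have := Df_gt0 Y' X'0; have := Nf_ge0 X; nra.
Qed.

Variable s : seq T.
Hypothesis s_perm : perm_eq s (enum W).
Hypothesis s_sorted : sorted (fun x y => e y <= e x) s.

Definition prefix (m : nat) : {set T} := [set u | u \in take m s].

Lemma prefix_sub m : prefix m \subset W.
Proof.
by apply/subsetP => u; rewrite inE => /mem_take; rewrite (perm_mem s_perm) mem_enum.
Qed.

Lemma prefix_card m : (m <= #|W|)%N -> #|prefix m| = m.
Proof.
move=> mW; rewrite cardsE; have /card_uniqP -> : uniq (take m s).
  by rewrite take_uniq // (perm_uniq s_perm) enum_uniq.
by rewrite size_takel // (perm_size s_perm) -cardE.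
Qed.

Lemma prefix_e_ge k u w : u \in prefix k -> w \in W -> w \notin prefix k -> e w <= e u.
Proof.
move=> uk wW wk; rewrite /prefix !inE in uk wk.
have : w \in take k s ++ drop k s by rewrite cat_take_drop (perm_mem s_perm) mem_enum.
rewrite mem_cat (negbTE wk) /=; apply: sorted_take_drop s_sorted uk.
by move=> x y z /= yx zy; apply: le_trans zy yx.
Qed.

Lemma swap_improves (X Y : {set T}) (w u : T) :
  X \subset G -> (0 < #|X|)%N -> Y \subset W ->
  w \in Y -> u \in W -> u \notin Y -> e w <= e u -> br u \in X ->
  FF X Y <= FF X (u |: (Y :\ w)).
Proof.
move=> XG X0 YW wY uW uY ewu bX.
have uY' : u \notin Y :\ w by rewrite in_setD1 (negbTE uY) andbF.
apply: FF_le => //.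
- by rewrite subUset sub1set uW (subset_trans (subsetDl _ _) YW).
- by rewrite cardsU1 uY' (cardsD1 w Y) wY.
rewrite /Df (big_setU1 _ uY') (big_setD1 w wY) /= bX b2RE.
have := b2R_le1 R (br w \in X); have := b2R_ge0 R (br w \in X); have := e_ge0 w.
nra.
Qed.

Lemma trade_improves (X Y : {set T}) (w u : T) :
  X \subset G -> (0 < #|X|)%N -> Y \subset W ->
  w \in Y -> u \in W -> e w <= e u -> br u \notin X ->
  FF X Y <= FF (br u |: X) (Y :\ w).
Proof.
move=> XG X0 YW wY uW ewu bX.
have [vb _ _] := branchP tree uW.
apply: FF_le => //.
- by rewrite subUset sub1set inE vb XG.
- by rewrite (subset_trans (subsetDl _ _) YW).
- by rewrite cardsU1 bX.
- by rewrite cardsU1 bX (cardsD1 w Y) wY; lia.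
- by rewrite /Nf (big_setU1 _ bX) /= lerDr a_ge0.
rewrite /Df (big_setU1 _ bX) (big_setD1 w wY) /=.
have sum_le : \sum_(z in Y :\ w) (1 - e z * b2R R (br z \in br u |: X)) <=
              \sum_(z in Y :\ w) (1 - e z * b2R R (br z \in X)).
  apply: ler_sum => z _; rewrite in_setU1 lerD2l lerN2 ler_wpM2l ?e_ge0 //.
  by case: (br z == br u); case: (br z \in X).
have := e_le_branch uW; have := e_ge0 w.
have := b2R_le1 R (br w \in X); have := b2R_ge0 R (br w \in X); nra.
Qed.

Definition feasible (X Y : {set T}) : bool :=
  [&& X \subset G, (0 < #|X|)%N & Y \subset W].

(* Termination measure of the exchange argument: lexicographically |Y|, then
   the number of elements of Y outside the prefix of the same length. *)
Definition mismatch (Y : {set T}) : nat := #|Y :\: prefix #|Y| |.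
Definition measure (Y : {set T}) : nat := (#|Y| * #|W|.+1 + mismatch Y)%N.

Lemma mismatch_le (Y : {set T}) : (mismatch Y <= #|Y|)%N.
Proof. exact/subset_leq_card/subsetDl. Qed.

Lemma prefix_mismatch (Y : {set T}) k : Y \subset W -> #|Y| = k -> Y != prefix k ->
  exists w u, [/\ w \in Y, w \notin prefix k, u \in prefix k & u \notin Y].
Proof.
move=> YW Yk Y_np.
have Pk : #|prefix k| = k by rewrite prefix_card // -Yk subset_leq_card.
have [w /setDP[wY wP]] : exists w, w \in Y :\: prefix k.
  apply/set0Pn; apply: contra Y_np => /eqP/eqP; rewrite setD_eq0 => YP.
  by rewrite eqEcard YP Pk Yk leqnn.
have [u /setDP[uP uY]] : exists u, u \in prefix k :\: Y.
  have same_card : #|prefix k :\: Y| = #|Y :\: prefix k|.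
    by rewrite !cardsD Pk -Yk [Y :&: _]setIC.
  apply/set0Pn; rewrite -card_gt0 same_card card_gt0.
  by apply/set0Pn; exists w; apply/setDP.
by exists w, u.
Qed.

Lemma exchange_step (X Y : {set T}) : feasible X Y -> Y != prefix #|Y| ->
  exists X' Y', [/\ feasible X' Y', (#|X'| + #|Y'| = #|X| + #|Y|)%N,
    FF X Y <= FF X' Y' & (measure Y' < measure Y)%N].
Proof.
move=> /and3P[XG X0 YW]; rewrite /measure /mismatch; move Ek: #|Y| => k Y_np.
have [w [u [wY wP uP uY]]] := prefix_mismatch YW Ek Y_np.
have uW := subsetP (prefix_sub k) u uP.
have ewu := prefix_e_ge uP (subsetP YW w wY) wP.
have YwW : Y :\ w \subset W by rewrite (subset_trans (subsetDl _ _) YW).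
have cardYw : k = (#|Y :\ w|).+1 by rewrite -Ek (cardsD1 w Y) wY.
have [bX|bX] := boolP (br u \in X).
- exists X, (u |: (Y :\ w)).
  have uYw : u \notin Y :\ w by rewrite in_setD1 (negbTE uY) andbF.
  have cardY' : #|u |: (Y :\ w)| = k by rewrite cardsU1 uYw cardYw.
  split; rewrite ?cardY' ?Ek ?swap_improves //.
    by rewrite /feasible XG X0 subUset sub1set uW YwW.
  rewrite ltn_add2l.
  have -> : (u |: (Y :\ w)) :\: prefix k = (Y :\: prefix k) :\ w.
    apply/setP => z; rewrite !inE; have [->|] := eqVneq z u; last by rewrite andbCA.
    by move: uP; rewrite inE => ->; rewrite andbF.
  by rewrite (cardsD1 w (Y :\: prefix k)) inE wY wP.
- exists (br u |: X), (Y :\ w); split; rewrite ?trade_improves //.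
  + have [vb _ _] := branchP tree uW.
    by rewrite /feasible subUset sub1set inE vb XG cardsU1 bX YwW.
  + by rewrite cardsU1 bX cardYw addSnnS.
  have := mismatch_le (Y :\ w); have := subset_leq_card YwW.
  rewrite /mismatch cardYw mulSn => YwW_card mis_le.
  rewrite [(#|W|.+1 + _)%N]addnC -addnA ltn_add2l ltn_addr // ltnS.
  exact: leq_trans mis_le YwW_card.
Qed.

Lemma prefix_dominates (X Y : {set T}) : feasible X Y ->
  exists X' m, [/\ feasible X' (prefix m), (m <= #|W|)%N,
    (#|X'| + m = #|X| + #|Y|)%N & FF X Y <= FF X' (prefix m)].
Proof.
have [n] := ubnP (measure Y); elim: n X Y => // n IH X Y /ltnSE le_n feas.
have [YP|Y_np] := eqVneq Y (prefix #|Y|).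
  exists X, #|Y|; rewrite -YP; split => //.
  by case/and3P: feas => _ _ /subset_leq_card.
have [X' [Y' [feas' card' le' lt']]] := exchange_step feas Y_np.
have [X'' [m [feas'' mW card'' le'']]] := IH X' Y' (leq_trans lt' le_n) feas'.
by exists X'', m; split; rewrite ?card'' ?card' // (le_trans le' le'').
Qed.

Definition prefix_feasible (l : nat) (X : {set T}) (m : nat) : bool :=
  [&& X \subset G, (0 < #|X|)%N, (m <= #|W|)%N & (#|X| + m == l)%N].

Definition prefix_optimal (l : nat) (X : {set T}) (m : nat) : Prop :=
  prefix_feasible l X m /\
  forall X' m', prefix_feasible l X' m' -> FF X' (prefix m') <= FF X (prefix m).

(* For 1 <= l <= n - 1 the prefix problem is feasible (v has a neighbour and
   n - 1 = |Gamma(v)| + |W|), hence has an optimum. *)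
Lemma prefix_optimum l : (1 <= l <= #|T| - 1)%N -> exists X m, prefix_optimal l X m.
Proof.
move=> /andP[l_ge1 l_le].
have vG : v \notin G by rewrite inE; case: tree => _ irr _ _; rewrite irr.
have cardT : #|T| = (1 + #|G| + #|W|)%N by rewrite -(cardsC (v |: G)) cardsU1 vG.
have [i vi] : exists i, adj v i by apply: neighbour_exists tree _; lia.
have G_gt0 : (0 < #|G|)%N by apply/card_gt0P; exists i; rewrite inE.
(* Witness: min(l, |Gamma(v)|) neighbours of v and the rest of l from W. *)
pose l1 := minn l #|G|.
pose X0 := [set u in take l1 (enum G)].
have X0G : X0 \subset G.
  by apply/subsetP => u; rewrite inE => /mem_take; rewrite mem_enum.
have cardX0 : #|X0| = l1.
  rewrite cardsE; have /card_uniqP -> := take_uniq l1 (enum_uniq (mem G)).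
  by rewrite size_takel // -cardE geq_minr.
pose feas (p : {set T} * 'I_#|W|.+1) := prefix_feasible l p.1 p.2.
have feas0 : feas (X0, inord (l - l1)).
  rewrite /feas /prefix_feasible /= X0G cardX0 inordK; last by lia.
  by apply/and3P; split; [lia | lia | apply/eqP; lia].
pose value (p : {set T} * 'I_#|W|.+1) := FF p.1 (prefix p.2).
have [[X m] feas_opt opt] := arg_maxP value feas0.
exists X, m; split => // X' m' feas'.
have m'W : (m' < #|W|.+1)%N by case/and4P: feas'.
exact: (opt (X', Ordinal m'W) feas').
Qed.

Lemma Fval_setE (x y : T -> bool) :
  Fval adj alpha q phi v x y = FF [set u | x u] [set u | y u].
Proof. by apply: Fval_ext => u; rewrite inE. Qed.

Lemma general_problem_max l X m : prefix_optimal l X m ->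
  is_max_of
    (fun p : (T -> bool) * (T -> bool) =>
       [/\ forall u, p.1 u -> u \in G, forall u, p.2 u -> u \in W,
           exists u, p.1 u & (#|[set u | p.1 u]| + #|[set u | p.2 u]|)%N = l])
    (fun p => Fval adj alpha q phi v p.1 p.2) (FF X (prefix m)).
Proof.
move=> [/and4P[XG X0 mW /eqP card_l] opt]; split.
  exists ((fun u => u \in X), yhat s m).
  split; last by apply: Fval_ext => // u; rewrite inE.
  split => /=.
  - exact: (subsetP XG).
  - by move=> u u_m; apply: (subsetP (prefix_sub m)); rewrite inE.
  - exact/card_gt0P.
  - by rewrite card_setE -card_l; congr (_ + _)%N; apply: prefix_card.
move=> [x y] /= [xG yW [u xu] card_xy]; rewrite Fval_setE.
have feas : feasible [set u | x u] [set u | y u].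
  rewrite /feasible; apply/and3P; split; try by apply/subsetP => z; rewrite inE; auto.
  by apply/card_gt0P; exists u; rewrite inE.
have [X' [m' [/and3P[X'G X'0 _] m'W card' le']]] := prefix_dominates feas.
apply: le_trans le' (opt X' m' _).
by rewrite /prefix_feasible X'G X'0 m'W card' card_xy eqxx.
Qed.

Lemma prefix_problem_max l X m : prefix_optimal l X m ->
  is_max_of
    (fun p : (T -> bool) * nat =>
       [/\ forall u, p.1 u -> u \in G, (1 <= #|[set u | p.1 u]| <= #|G|)%N,
           (p.2 <= #|W|)%N & (#|[set u | p.1 u]| + p.2)%N = l])
    (fun p => Fval adj alpha q phi v p.1 (yhat s p.2)) (FF X (prefix m)).
Proof.
move=> [/and4P[XG X0 mW /eqP card_l] opt]; split.
  exists ((fun u => u \in X), m); split; last by apply: Fval_ext => // u; rewrite inE.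
  split => //=; first exact: (subsetP XG).
  - by rewrite card_setE X0 subset_leq_card.
  - by rewrite card_setE.
move=> [x m'] /= [xG /andP[x0 _] m'W card_xm].
have -> : Fval adj alpha q phi v x (yhat s m') = FF [set u | x u] (prefix m').
  by apply: Fval_ext => u; rewrite inE.
apply: opt; rewrite /prefix_feasible x0 m'W card_xm eqxx !andbT.
by apply/subsetP => u; rewrite inE; apply: xG.
Qed.

End Objective.

Theorem lemma4p3 (R : realFieldType) (T : finType) (adj : rel T) (alpha : R)
    (q : T -> R) (phi : T -> T -> R) (v : T) (s : seq T) (l : nat) :
  is_tree adj ->
  0 < alpha < 1 ->
  (forall u, 0 <= q u) -> \sum_u q u = 1 ->
  (forall w, phi w w = 1) ->
  (forall u w, u != w ->
     phi u w = (1 - alpha) / (#|nbhd adj u|%:R) * \sum_(z in nbhd adj u) phi z w) ->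
  perm_eq s (enum (Wset adj v)) ->
  sorted (fun a b => e_const alpha phi v b <= e_const alpha phi v a) s ->
  (1 <= l <= #|T| - 1)%N ->
  exists m : R,
    is_max_of
      (fun p : (T -> bool) * (T -> bool) =>
         [/\ forall u, p.1 u -> u \in nbhd adj v,
             forall u, p.2 u -> u \in Wset adj v,
             exists u, p.1 u &
             (#|[set u | p.1 u]| + #|[set u | p.2 u]|)%N = l])
      (fun p => Fval adj alpha q phi v p.1 p.2) m /\
    is_max_of
      (fun p : (T -> bool) * nat =>
         [/\ forall u, p.1 u -> u \in nbhd adj v,
             (1 <= #|[set u | p.1 u]| <= #|nbhd adj v|)%N,
             (p.2 <= #|Wset adj v|)%N &
             (#|[set u | p.1 u]| + p.2)%N = l])
      (fun p => Fval adj alpha q phi v p.1 (yhat s p.2)) m.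
Proof.
move=> tree /andP[alpha_gt0 alpha_lt1] q_ge0 _ phi_id phi_rec s_perm s_sorted l_range.
have [X [m opt]] := prefix_optimum q tree s_perm s_sorted l_range.
exists (FF adj alpha q phi v X (prefix s m)); split; last exact: prefix_problem_max opt.
exact: (general_problem_max tree alpha_gt0 alpha_lt1 q_ge0 (phi_id v)
          (fun u => phi_rec u v) s_perm s_sorted opt).
Qed.
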